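(* Under the same patch setup as below, fix an order $P\ge1$ and $0<r\le1$, and define edge values by the Lagrangian interpolation $$u^I_{n+1}=u^I_1+\sum_{k=1}^{P}\Big(\prod_{\ell=0}^{k-1}(r^2-\ell^2)\Big)\frac{(2k/r)\,\mu\delta^{2k-1}+\delta^{2k}}{(2k)!}\,u^I_1,\qquad u^I_{0}=u^I_n+\sum_{k=1}^{P}\Big(\prod_{\ell=0}^{k-1}(r^2-\ell^2)\Big)\frac{-(2k/r)\,\mu\delta^{2k-1}+\delta^{2k}}{(2k)!}\,u^I_n .$$ Writing these as $u^I_{n+1}=\sum_J\mathcal I^{IJ}_{n1}u^J_1$ and $u^I_0=\sum_J\mathcal I^{IJ}_{1n}u^J_n$, the coefficients are real and satisfy $\mathcal I^{IJ}_{n1}=\mathcal I^{JI}_{1n}$ for all $I,J$; consequently, for every $P$, the linear system $\partial_t\mathbf u=\mathcal L\mathbf u$ of the patch scheme has a real symmetric (self-adjoint) matrix $\mathcal L$.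
   Context: Setup: $N$ patches indexed $I=1,\dots,N$ (indices taken cyclically modulo $N$, macroscale periodic domain), macroscale spacing $H$, each with $n$ interior points of spacing $d$, patch width $h=nd=rH$. Interior values $u^I_i(t)$, $i=1,\dots,n$, satisfy $d^2\partial_t u^I_i=\kappa^I_{i+\frac12}(u^I_{i+1}-u^I_i)+\kappa^I_{i-\frac12}(u^I_{i-1}-u^I_i)$ with real diffusivities satisfying $\kappa^I_{1/2}=\kappa^J_{n+1/2}$ for all $I,J$; $\mathbf u\in\mathbb R^{nN}$ collects all interior values. Operators act on the patch index: $E u^I_i=u^{I+1}_i$, $E^{-1}u^I_i=u^{I-1}_i$; $\mu\delta:=\tfrac12(E-E^{-1})$, $\delta^2:=E-2+E^{-1}$, and for $k\ge1$, $\mu\delta^{2k-1}:=\tfrac12(E-E^{-1})(E-2+E^{-1})^{k-1}$, $\delta^{2k}:=(E-2+E^{-1})^{k}$. *)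

From HB Require Import structures.
From mathcomp Require Import all_boot all_order all_algebra.
Set Implicit Arguments. Unset Strict Implicit. Unset Printing Implicit Defensive.
Import Order.TTheory GRing.Theory Num.Theory.
Local Open Scope ring_scope.

Section PatchDefs.
Variable R : realFieldType.
Variable N : nat.

(* Shift operators on the patch index (cyclic, macroscale periodic):
   (E *m w) I = w (I+1),  (Einv *m w) I = w (I-1). *)
Definition Emx : 'M[R]_N := \matrix_(I, J) ((J == ordS I)%:R : R).
Definition Einvmx : 'M[R]_N := \matrix_(I, J) ((J == ord_pred I)%:R : R).

Definition delta2 : 'M[R]_N := Emx - 2%:M + Einvmx.
(* mu delta^{2k-1} = 1/2 (E - E^{-1}) (E - 2 + E^{-1})^{k-1}, k >= 1 *)
Definition mudelta_odd (k : nat) : 'M[R]_N :=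
  ((1 / 2 : R) *: (Emx - Einvmx)) *m (delta2 ^+ k.-1).
Definition delta_even (k : nat) : 'M[R]_N := delta2 ^+ k.

Definition interp_coef (r : R) (k : nat) : R :=
  (\prod_(l < k) (r ^+ 2 - (l%:R) ^+ 2)) / ((2 * k)`!)%:R.

Definition Inn1 (P : nat) (r : R) : 'M[R]_N :=
  1%:M + \sum_(1 <= k < P.+1)
     interp_coef r k *: (((2 * k)%:R / r) *: mudelta_odd k + delta_even k).
Definition I1n (P : nat) (r : R) : 'M[R]_N :=
  1%:M + \sum_(1 <= k < P.+1)
     interp_coef r k *: (- (((2 * k)%:R / r) *: mudelta_odd k) + delta_even k).

Variable n : nat.

(* value u^I_m for paper index m in 1..n (interior point i : 'I_n has m = i+1) *)
Definition val_at (u : 'I_N -> 'I_n -> R) (I : 'I_N) (m : nat) : R :=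
  \sum_(i < n | i.+1 == m) u I i.

Definition ext_val (P : nat) (r : R) (u : 'I_N -> 'I_n -> R) (I : 'I_N) (m : nat) : R :=
  if m == 0%N then \sum_J I1n P r I J * val_at u J n
  else if m == n.+1 then \sum_J Inn1 P r I J * val_at u J 1
  else val_at u I m.

(* kappa I j = kappa^I_{j+1/2}, j = 0..n.
   Right-hand side of d_t u^I_i (paper index m = i+1):
   d^{-2} [kappa^I_{m+1/2}(u_{m+1}-u_m) + kappa^I_{m-1/2}(u_{m-1}-u_m)] *)
Definition patch_rhs (P : nat) (r d : R) (kappa : 'I_N -> nat -> R)
    (u : 'I_N -> 'I_n -> R) (I : 'I_N) (i : 'I_n) : R :=
  let m := i.+1 in
  (kappa I m * (ext_val P r u I m.+1 - ext_val P r u I m)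
   + kappa I i * (ext_val P r u I i - ext_val P r u I m)) / d ^+ 2.

Definition unit_vec (J : 'I_N) (j : 'I_n) : 'I_N -> 'I_n -> R :=
  fun K k => ((K == J) && (k == j))%:R.

Definition Lmat (P : nat) (r d : R) (kappa : 'I_N -> nat -> R)
    (I : 'I_N) (i : 'I_n) (J : 'I_N) (j : 'I_n) : R :=
  patch_rhs P r d kappa (unit_vec J j) I i.

End PatchDefs.

From HB Require Import structures.
From mathcomp Require Import all_boot all_order all_algebra.
From mathcomp Require Import lra.
Import Order.TTheory GRing.Theory Num.Theory.
Local Open Scope ring_scope.

(* Transposition exchanges the two cyclic
   shifts, E^T = E^{-1}.  Hence delta^2 = E - 2 + E^{-1} is symmetric, so are
   its powers delta^{2k}, while mu delta^{2k-1} = (E - E^{-1})/2 * delta^{2k-2}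
   is antisymmetric because E - E^{-1} commutes with delta^2.  Transposing
   the defining sum of I_{n1} therefore flips exactly the sign of the odd
   terms, which gives I_{1n}: (I_{n1})^T = I_{1n}.

   Its
   off-diagonal part is a flux across a face between neighbouring points, and
   the key identity [flux_sym] says that the flux from (I,i) towards its upper
   neighbour, weighted by its diffusivity, equals the flux from (J,j) towards
   its lower neighbour; at patch edges this is Part 1 together with the
   hypothesis kappa^I_{1/2} = kappa^J_{n+1/2}. *)

Lemma trmx_exp_sym {R : comNzRingType} {m : nat} (A : 'M[R]_m) (k : nat) :
  A^T = A -> (A ^+ k)^T = A ^+ k.
Proof.
move=> symA; elim: k => [|k IHk]; first by rewrite expr0 trmx1.
by rewrite exprSr -mulmxE trmx_mul IHk symA mulmxE -exprS -exprSr.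
Qed.

Section InterpolationMatrices.
Variables (R : realFieldType) (N : nat).

Local Notation E := (Emx R N).
Local Notation Einv := (Einvmx R N).

Lemma tr_Emx : E^T = Einv.
Proof.
apply/matrixP => I J; rewrite !mxE.
rewrite (_ : (I == ordS J) = (J == ord_pred I)) //.
by apply/eqP/eqP => [->|->]; [rewrite ordSK | rewrite ord_predK].
Qed.

Lemma tr_Einvmx : Einv^T = E.
Proof. by rewrite -tr_Emx trmxK. Qed.

(* The two cyclic shifts are mutually inverse, hence commute. *)
Lemma comm_Emx_Einvmx : GRing.comm E Einv.
Proof.
have shift_inv (I K : 'I_N) (f g : 'I_N -> 'I_N) : cancel f g ->
    \sum_J ((J == f I)%:R * (K == g J)%:R) = ((I == K)%:R : R).
  move=> fK; rewrite (bigD1 (f I)) //= eqxx fK mul1r big1 ?addr0 1?eq_sym //.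
  by move=> J /negbTE ->; rewrite mul0r.
rewrite /GRing.comm -!mulmxE; apply/matrixP => I K; rewrite !mxE.
under eq_bigr do rewrite !mxE.
under [RHS]eq_bigr do rewrite !mxE.
by rewrite (shift_inv _ _ _ _ (@ordSK N)) (shift_inv _ _ _ _ (@ord_predK N)).
Qed.

Lemma comm_delta2_cdiff : GRing.comm (delta2 R N) (E - Einv).
Proof.
have commE : GRing.comm (E - Einv) E.
  by apply/commr_sym/commrB; [exact: commr_refl | exact: comm_Emx_Einvmx].
have commEinv : GRing.comm (E - Einv) Einv.
  by apply/commr_sym/commrB; [exact/commr_sym/comm_Emx_Einvmx | exact: commr_refl].
have comm2 : GRing.comm (E - Einv) 2%:M.
  by rewrite /GRing.comm -!mulmxE mul_scalar_mx mul_mx_scalar.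
by apply/commr_sym; rewrite /delta2; apply: commrD => //; exact: commrB.
Qed.

Lemma tr_delta2 : (delta2 R N)^T = delta2 R N.
Proof.
rewrite /delta2 !linearD /= linearN /= tr_Emx tr_Einvmx tr_scalar_mx.
by rewrite addrC (addrC Einv) addrA.
Qed.

Lemma tr_delta_even (k : nat) : (delta_even R N k)^T = delta_even R N k.
Proof. exact: trmx_exp_sym _ _ tr_delta2. Qed.

Lemma tr_mudelta_odd (k : nat) : (mudelta_odd R N k)^T = - mudelta_odd R N k.
Proof.
have commX : (E - Einv) *m delta2 R N ^+ k.-1 = delta2 R N ^+ k.-1 *m (E - Einv).
  by rewrite mulmxE; apply/commrX/commr_sym/comm_delta2_cdiff.
rewrite /mudelta_odd trmx_mul (trmx_exp_sym _ _ tr_delta2) linearZ /= linearB /=.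
by rewrite tr_Emx tr_Einvmx -opprB scalerN mulmxN -scalemxAr -scalemxAl commX.
Qed.

Lemma tr_Inn1 (P : nat) (r : R) : (Inn1 N P r)^T = I1n N P r.
Proof.
rewrite /Inn1 /I1n linearD /= trmx1 linear_sum /=; congr (_ + _).
apply: eq_bigr => k _.
by rewrite linearZ /= linearD /= linearZ /= tr_mudelta_odd tr_delta_even scalerN.
Qed.

Lemma Inn1_I1n (P : nat) (r : R) (I J : 'I_N) : Inn1 N P r I J = I1n N P r J I.
Proof. by rewrite -(tr_Inn1 P r) [RHS]mxE. Qed.

End InterpolationMatrices.

Section SystemMatrix.
Variables (R : realFieldType) (N n P : nat) (d r : R).
Variable kappa : 'I_N -> nat -> R.
Hypothesis kappa_edges : forall I J : 'I_N, kappa I 0%N = kappa J n.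

(* coef I m J j: the coefficient of u^J_j in the extended value u^I_m. *)
Local Notation coef I m J j := (ext_val P r (unit_vec R J j) I m).

Lemma val_at_unit (J : 'I_N) (j : 'I_n) (K : 'I_N) (m : nat) :
  val_at (unit_vec R J j) K m = ((K == J) && (j.+1 == m))%:R.
Proof.
rewrite /val_at /unit_vec; have [<-|neq_m] := eqVneq j.+1 m.
- rewrite (bigD1 j) //= eqxx andbT big1 ?addr0 // => k /andP[_ neq_kj].
  by rewrite (negbTE neq_kj) andbF.
- rewrite andbF big1 // => k /eqP eq_km.
  suff /negbTE -> : k != j by rewrite andbF.
  by apply: contra neq_m => /eqP <-; rewrite eq_km.
Qed.

Lemma sum_mx_val_at_unit (M : 'M[R]_N) (I J : 'I_N) (j : 'I_n) (m : nat) :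
  \sum_K M I K * val_at (unit_vec R J j) K m = M I J * (j.+1 == m)%:R.
Proof.
under eq_bigr do rewrite val_at_unit.
rewrite (bigD1 J) //= eqxx big1 ?addr0 // => K /negbTE ->.
by rewrite mulr0.
Qed.

Lemma coef_interior (I J : 'I_N) (j : 'I_n) (m : nat) :
  (0 < m <= n)%N -> coef I m J j = ((I == J) && (j.+1 == m))%:R.
Proof.
case/andP => m_gt0 m_le_n.
by rewrite /ext_val gtn_eqF // ltn_eqF ?ltnS // val_at_unit.
Qed.

Lemma coef_top (I J : 'I_N) (j : 'I_n) :
  coef I n.+1 J j = Inn1 N P r I J * (j == 0%N :> nat)%:R.
Proof. by rewrite /ext_val /= eqxx sum_mx_val_at_unit eqSS. Qed.

Lemma coef_bottom (I J : 'I_N) (j : 'I_n) :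
  coef I 0 J j = I1n N P r I J * (j.+1 == n)%:R.
Proof. by rewrite /ext_val /= sum_mx_val_at_unit. Qed.

Lemma flux_sym (I J : 'I_N) (i j : 'I_n) :
  kappa I i.+1 * coef I i.+2 J j = kappa J j * coef J j I i.
Proof.
have lt_jn := ltn_ord j.
have [top|not_top] := eqVneq i.+1 n.
  have [j0|j_gt0] := posnP j.
    by rewrite top coef_top j0 coef_bottom top !eqxx (kappa_edges J I) Inn1_I1n.
  rewrite top coef_top (gtn_eqF j_gt0) mulr0 coef_interior; last by rewrite j_gt0 ltnW.
  by rewrite top (gtn_eqF lt_jn) andbF !mulr0.
have le_in : (i.+2 <= n)%N by rewrite ltn_neqAle not_top ltn_ord.
have [j0|j_gt0] := posnP j.
  by rewrite j0 coef_bottom (negbTE not_top) !mulr0 coef_interior // j0 andbF mulr0.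
rewrite !coef_interior //; last by rewrite j_gt0 ltnW.
rewrite eqSS (eq_sym J) (eq_sym i.+1).
by case: andP => [[/eqP <- /eqP ->] | _]; rewrite ?mulr0.
Qed.

Lemma coef_diag (I J : 'I_N) (i j : 'I_n) :
  coef I i.+1 J j = ((I == J) && (i == j))%:R.
Proof. by rewrite coef_interior ?ltn_ord // eqSS (eq_sym (j : nat)). Qed.

(* Symmetry of the system matrix: the two face fluxes swap roles. *)
Lemma Lmat_sym (I J : 'I_N) (i j : 'I_n) :
  Lmat P r d kappa I i J j = Lmat P r d kappa J j I i.
Proof.
rewrite /Lmat /patch_rhs !coef_diag; congr (_ / _).
have fluxIJ := flux_sym I J i j; have fluxJI := flux_sym J I j i.
rewrite !mulrBr fluxIJ fluxJI (eq_sym J) (eq_sym j).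
have [<-|] := eqVneq I J; have [<-|] := eqVneq i j; rewrite ?mulr0 /=; lra.
Qed.

End SystemMatrix.

(* Symmetry holds for every order P and every ratio r. *)
Theorem lemma2 (R : realFieldType) (N n P : nat) (H d r : R)
    (kappa : 'I_N -> nat -> R) :
  (0 < N)%N -> (0 < n)%N -> (1 <= P)%N ->
  0 < H -> 0 < d -> r = n%:R * d / H -> 0 < r -> r <= 1 ->
  (forall I J : 'I_N, kappa I 0%N = kappa J n) ->
  (forall I J : 'I_N, Inn1 N P r I J = I1n N P r J I) /\
  (forall (I J : 'I_N) (i j : 'I_n),
      Lmat P r d kappa I i J j = Lmat P r d kappa J j I i).
Proof.
move=> _ _ _ _ _ _ _ _ kappa_edges; split.
- exact: Inn1_I1n.
- exact: Lmat_sym kappa_edges.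
Qed.
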